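(* Let $(X,d)$ be a complete metric space, let $N\in\mathbb{N}\setminus\{0\}$, let $\alpha:X\times X\rightarrow[0,+\infty)$ be $N$--transitive, and let $T:X\rightarrow X$ be an $\alpha$--contractive mapping of Meir--Keeler type such that $T$ is $\alpha$--admissible, there exists $x_{0}\in X$ with $\alpha(x_{0},Tx_{0})\geq1$, and at least one of the following holds: (i) $T$ is $\alpha$--orbitally continuous; (ii) $(X,d)$ is $(T,\alpha)$--regular. Assume moreover that $X$ is $\alpha$--connected. Then $T$ has a unique fixed point $x^{\ast}$, and $T^{n}x\rightarrow x^{\ast}$ as $n\rightarrow\infty$ for every $x\in X$.
   Context: $\mathbb{N}$ is the set of non-negative integers; $T^n$ is the $n$-th iterate of $T$. $T$ is an $\alpha$--contractive mapping of Meir--Keeler type if for every $\varepsilon>0$ there exists $\delta(\varepsilon)>0$ such that for all $x,y\in X$: $\varepsilon\leq d(x,y)<\varepsilon+\delta(\varepsilon)$ implies $\alpha(x,y)d(Tx,Ty)<\varepsilon$. $T$ is $\alpha$--admissible if $\alpha(x,y)\geq1$ implies $\alpha(Tx,Ty)\geq1$. $\alpha$ is $N$--transitive if for all $x_0,\dots,x_{N+1}\in X$ with $\alpha(x_i,x_{i+1})\geq1$ for all $i\in\{0,\dots,N\}$ one has $\alpha(x_0,x_{N+1})\geq1$. A sequence $\{x_n\}$ is $(T,\alpha)$--orbital if $x_n=T^nx_0$ and $\alpha(x_n,x_{n+1})\geq1$ for all $n$. $T$ is $\alpha$--orbitally continuous if for every $(T,\alpha)$--orbital sequence $\{x_n\}$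 with $x_n\rightarrow x$ there is a subsequence with $Tx_{n(k)}\rightarrow Tx$. $(X,d)$ is $(T,\alpha)$--regular if for every $(T,\alpha)$--orbital sequence $\{x_n\}$ with $x_n\rightarrow x$ there is a subsequence with $\alpha(x_{n(k)},x)\geq1$ for all $k$. An $\alpha$--chain from $x$ to $y$ is a tuple $(z_0,\dots,z_n)$ with $z_0=x$, $z_n=y$ and, for each $i\in\{1,\dots,n\}$, $\alpha(z_{i-1},z_i)\geq1$ or $\alpha(z_i,z_{i-1})\geq1$. $X$ is $\alpha$--connected if for all $x\neq y$ in $X$ there exists an $\alpha$--chain from $x$ to $y$. *)

From Stdlib Require Import Reals Lra Lia.
Open Scope R_scope.

Section Defs.
Context {X : Type}.

Definition is_metric (d : X -> X -> R) : Prop :=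
  (forall x y, d x y = 0 <-> x = y) /\
  (forall x y, d x y = d y x) /\
  (forall x y z, d x z <= d x y + d y z).

Definition cauchy_seq (d : X -> X -> R) (u : nat -> X) : Prop :=
  forall eps, 0 < eps -> exists N : nat, forall m n : nat,
    (N <= m)%nat -> (N <= n)%nat -> d (u m) (u n) < eps.

Definition seq_converges (d : X -> X -> R) (u : nat -> X) (x : X) : Prop :=
  forall eps, 0 < eps -> exists N : nat, forall n : nat,
    (N <= n)%nat -> d (u n) x < eps.

Definition complete_metric (d : X -> X -> R) : Prop :=
  is_metric d /\ forall u, cauchy_seq d u -> exists x, seq_converges d u x.

Definition strictly_increasing (phi : nat -> nat) : Prop :=
  forall k, (phi k < phi (S k))%nat.

Definition iterT (T : X -> X) (n : nat) (x : X) : X := Nat.iter n T x.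

Definition alpha_MK_contractive (d : X -> X -> R) (alpha : X -> X -> R)
  (T : X -> X) : Prop :=
  forall eps, 0 < eps -> exists delta, 0 < delta /\
    forall x y, eps <= d x y -> d x y < eps + delta ->
      alpha x y * d (T x) (T y) < eps.

Definition alpha_admissible (alpha : X -> X -> R) (T : X -> X) : Prop :=
  forall x y, 1 <= alpha x y -> 1 <= alpha (T x) (T y).

Definition N_transitive (N : nat) (alpha : X -> X -> R) : Prop :=
  forall x : nat -> X,
    (forall i, (i <= N)%nat -> 1 <= alpha (x i) (x (S i))) ->
    1 <= alpha (x O) (x (S N)).

Definition orbital (alpha : X -> X -> R) (T : X -> X) (x0 : X) : Prop :=
  forall n, 1 <= alpha (iterT T n x0) (iterT T (S n) x0).

Definition alpha_orbitally_continuous (d : X -> X -> R) (alpha : X -> X -> R)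
  (T : X -> X) : Prop :=
  forall x0 x, orbital alpha T x0 ->
    seq_converges d (fun n => iterT T n x0) x ->
    exists phi, strictly_increasing phi /\
      seq_converges d (fun k => T (iterT T (phi k) x0)) (T x).

Definition T_alpha_regular (d : X -> X -> R) (alpha : X -> X -> R)
  (T : X -> X) : Prop :=
  forall x0 x, orbital alpha T x0 ->
    seq_converges d (fun n => iterT T n x0) x ->
    exists phi, strictly_increasing phi /\
      forall k, 1 <= alpha (iterT T (phi k) x0) x.

Definition alpha_chain (alpha : X -> X -> R) (x y : X) : Prop :=
  exists (n : nat) (z : nat -> X), z O = x /\ z n = y /\
    forall i, (1 <= i <= n)%nat ->
      1 <= alpha (z (i - 1)%nat) (z i) \/ 1 <= alpha (z i) (z (i - 1)%nat).

Definition alpha_connected (alpha : X -> X -> R) : Prop :=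
  forall x y, x <> y -> alpha_chain alpha x y.

End Defs.

(* Along the orbit of x0, consecutive points are alpha-related, and N-transitivity makes
   u_n alpha-related to every u_(n+1+jN).  For alpha-related a, b the distances
   d(T^n a, T^n b) are nonincreasing, and the Meir-Keeler condition at their limit forces
   them to 0.  A Meir-Keeler induction over j then bounds d(u_n, u_(n+1+jN)), and the gaps
   of length less than N are covered by small consecutive steps, so the orbit is Cauchy.
   Its limit is fixed by either continuity hypothesis, and alpha-connectedness propagates
   the vanishing of d(T^n a, T^n b) along chains, which gives global attraction and
   uniqueness. *)
From Stdlib Require Import Reals Lra Lia Classical.
Open Scope R_scope.

Lemma strictly_increasing_ge (phi : nat -> nat) :
  strictly_increasing phi -> forall k, (k <= phi k)%nat.
Proof. intros Hphi k; induction k; [lia|]. specialize (Hphi k); lia. Qed.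

Lemma iterT_add {X : Type} (T : X -> X) p q x :
  iterT T (p + q) x = iterT T p (iterT T q x).
Proof. apply Nat.iter_add. Qed.

Lemma iterT_swap {X : Type} (T : X -> X) n x : iterT T n (T x) = T (iterT T n x).
Proof. apply Nat.iter_swap. Qed.

Lemma iterT_fixed {X : Type} (T : X -> X) x : T x = x -> forall n, iterT T n x = x.
Proof.
  intros Hx n; induction n as [|n IH]; [reflexivity|].
  simpl; fold (iterT T n x). now rewrite IH.
Qed.

Lemma decreasing_MK_vanishes (e : nat -> R) :
  (forall n, 0 <= e n) -> Un_decreasing e ->
  (forall eps, 0 < eps -> exists delta, 0 < delta /\
     forall n, eps <= e n -> e n < eps + delta -> e (S n) < eps) ->
  forall g, 0 < g -> exists K, forall n, (K <= n)%nat -> e n < g.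
Proof.
  intros He_ge0 He_dec HMK.
  assert (He_lb : has_lb e).
  { exists 0. intros y [i ->]. unfold opp_seq. specialize (He_ge0 i). lra. }
  destruct (decreasing_cv e He_dec He_lb) as [L HL].
  pose proof (decreasing_ineq e L He_dec HL) as HL_le.
  assert (HL0 : L <= 0).
  { destruct (Rle_lt_dec L 0) as [|HLpos]; [assumption|exfalso].
    destruct (HMK L HLpos) as [delta [Hdelta Hstep]].
    destruct (HL delta Hdelta) as [K HK].
    specialize (HK K (le_n K)). unfold Rdist in HK. apply Rabs_def2 in HK.
    specialize (Hstep K (HL_le K) ltac:(lra)). specialize (HL_le (S K)). lra. }
  intros g Hg. destruct (HL g Hg) as [K HK]. exists K. intros n Hn.
  specialize (HK n Hn). unfold Rdist in HK. apply Rabs_def2 in HK. lra.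
Qed.

Lemma transitive_jump {X : Type} (alpha : X -> X -> R) (N : nat) (u : nat -> X) :
  N_transitive N alpha -> (forall n, 1 <= alpha (u n) (u (S n))) ->
  forall j n, 1 <= alpha (u n) (u (n + 1 + j * N)%nat).
Proof.
  intros HN Hu j. induction j as [|j IH]; intro n.
  - replace (n + 1 + 0 * N)%nat with (S n) by lia. apply Hu.
  - replace (n + 1 + S j * N)%nat with (n + 1 + j * N + N)%nat by lia.
    set (m := (n + 1 + j * N)%nat).
    apply (HN (fun i => match i with O => u n | S i' => u (m + i')%nat end)).
    intros [|i] _; simpl.
    + rewrite Nat.add_0_r. apply IH.
    + replace (m + S i)%nat with (S (m + i)) by lia. apply Hu.
Qed.

Section Metric.
Context {X : Type} (d : X -> X -> R).
Hypothesis Hd : is_metric d.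

Lemma dist_refl x : d x x = 0.
Proof. now apply (proj1 Hd). Qed.

Lemma dist_sym x y : d x y = d y x.
Proof. exact (proj1 (proj2 Hd) x y). Qed.

Lemma dist_triangle x y z : d x z <= d x y + d y z.
Proof. exact (proj2 (proj2 Hd) x y z). Qed.

Lemma dist_ge0 x y : 0 <= d x y.
Proof. pose proof (dist_triangle x y x). rewrite (dist_sym y x), dist_refl in H. lra. Qed.

Definition asymptotic (u v : nat -> X) : Prop :=
  forall eps, 0 < eps -> exists K, forall n, (K <= n)%nat -> d (u n) (v n) < eps.

Lemma asymptotic_refl u : asymptotic u u.
Proof. intros eps Heps. exists O. intros n _. rewrite dist_refl. exact Heps. Qed.

Lemma asymptotic_sym u v : asymptotic u v -> asymptotic v u.
Proof.
  intros Huv eps Heps. destruct (Huv eps Heps) as [K HK]. exists K.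
  intros n Hn. rewrite dist_sym. auto.
Qed.

Lemma asymptotic_trans u v w : asymptotic u v -> asymptotic v w -> asymptotic u w.
Proof.
  intros Huv Hvw eps Heps.
  destruct (Huv (eps / 2)) as [K1 H1]; [lra|].
  destruct (Hvw (eps / 2)) as [K2 H2]; [lra|].
  exists (K1 + K2)%nat. intros n Hn.
  specialize (H1 n ltac:(lia)). specialize (H2 n ltac:(lia)).
  pose proof (dist_triangle (u n) (v n) (w n)). lra.
Qed.

Lemma limit_unique u a b : seq_converges d u a -> seq_converges d u b -> a = b.
Proof.
  intros Ha Hb. apply (proj1 Hd).
  assert (Hab : asymptotic (fun _ => a) (fun _ => b)).
  { apply (asymptotic_trans _ u); [apply asymptotic_sym|]; assumption. }
  pose proof (dist_ge0 a b).
  destruct (Rle_lt_dec (d a b) 0) as [|Hpos]; [lra|].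
  destruct (Hab (d a b) Hpos) as [K HK]. specialize (HK K (le_n K)). lra.
Qed.

Lemma converges_subseq u x phi :
  strictly_increasing phi -> seq_converges d u x -> seq_converges d (fun k => u (phi k)) x.
Proof.
  intros Hphi Hu eps Heps. destruct (Hu eps Heps) as [K HK]. exists K. intros k Hk.
  apply HK. pose proof (strictly_increasing_ge phi Hphi k). lia.
Qed.

Lemma dist_telescope u c K :
  (forall m, (K <= m)%nat -> d (u m) (u (S m)) <= c) ->
  forall n k, (K <= n)%nat -> d (u n) (u (n + k)%nat) <= INR k * c.
Proof.
  intros Hc n k Hn. induction k as [|k IH].
  - rewrite Nat.add_0_r, dist_refl. simpl. lra.
  - rewrite S_INR. replace (n + S k)%nat with (S (n + k)) by lia.
    pose proof (dist_triangle (u n) (u (n + k)%nat) (u (S (n + k)))).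
    pose proof (Hc (n + k)%nat ltac:(lia)). lra.
Qed.

End Metric.

Section Contraction.
Context {X : Type} (d : X -> X -> R) (alpha : X -> X -> R) (T : X -> X).
Hypothesis Hd : is_metric d.
Hypothesis HMK : alpha_MK_contractive d alpha T.
Hypothesis Hadm : alpha_admissible alpha T.

Let orbit (x : X) : nat -> X := fun n => iterT T n x.

Lemma alpha_dist_nonexpansive a b : 1 <= alpha a b -> d (T a) (T b) <= d a b.
Proof.
  intros Hab. pose proof (dist_ge0 d Hd a b).
  destruct (Rle_lt_dec (d a b) 0) as [Hzero|Hpos].
  - assert (a = b) as -> by (apply (proj1 Hd); lra).
    rewrite !(dist_refl d Hd). lra.
  - destruct (HMK (d a b) Hpos) as [delta [Hdelta Hlt]].
    specialize (Hlt a b (Rle_refl _) ltac:(lra)).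
    pose proof (dist_ge0 d Hd (T a) (T b)). nra.
Qed.

Lemma MK_step eps delta :
  (forall x y, eps <= d x y -> d x y < eps + delta -> alpha x y * d (T x) (T y) < eps) ->
  forall a b, 1 <= alpha a b -> d a b < eps + delta -> d (T a) (T b) < eps.
Proof.
  intros Hlt a b Hab Hdab. pose proof (dist_ge0 d Hd (T a) (T b)).
  destruct (Rle_lt_dec eps (d a b)) as [Hge|Hlt'].
  - specialize (Hlt a b Hge Hdab). nra.
  - pose proof (alpha_dist_nonexpansive a b Hab). lra.
Qed.

Lemma admissible_iter a b : 1 <= alpha a b -> forall n, 1 <= alpha (orbit a n) (orbit b n).
Proof. intros Hab n; induction n; simpl; auto. Qed.

Lemma iter_dist_antitone a b n m : 1 <= alpha a b -> (n <= m)%nat ->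
  d (orbit a m) (orbit b m) <= d (orbit a n) (orbit b n).
Proof.
  intros Hab Hnm. induction Hnm as [|m _ IH]; [lra|].
  eapply Rle_trans; [|exact IH]. apply alpha_dist_nonexpansive, admissible_iter, Hab.
Qed.

Lemma alpha_iter_asymptotic a b : 1 <= alpha a b -> asymptotic d (orbit a) (orbit b).
Proof.
  intros Hab. unfold asymptotic.
  apply (decreasing_MK_vanishes (fun n => d (orbit a n) (orbit b n))).
  - intro n. apply (dist_ge0 d Hd).
  - intro n. apply iter_dist_antitone; auto.
  - intros eps Heps. destruct (HMK eps Heps) as [delta [Hdelta Hlt]].
    exists delta. split; [exact Hdelta|]. intros n _ Hn.
    apply (MK_step eps delta Hlt); [apply admissible_iter|]; assumption.
Qed.

Lemma chain_iter_asymptotic a b : alpha_chain alpha a b -> asymptotic d (orbit a) (orbit b).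
Proof.
  intros [n [z [<- [<- Hz]]]].
  enough (forall i, (i <= n)%nat -> asymptotic d (orbit (z O)) (orbit (z i))) by auto.
  induction i as [|i IH]; intros Hi; [apply asymptotic_refl; exact Hd|].
  apply (asymptotic_trans d Hd _ _ _ (IH ltac:(lia))).
  specialize (Hz (S i) ltac:(lia)). rewrite Nat.sub_succ, Nat.sub_0_r in Hz.
  destruct Hz as [Hlink|Hlink].
  - apply alpha_iter_asymptotic, Hlink.
  - apply (asymptotic_sym d Hd), alpha_iter_asymptotic, Hlink.
Qed.

Lemma iter_converges_to_fixed xs :
  alpha_connected alpha -> T xs = xs -> forall x, seq_converges d (orbit x) xs.
Proof.
  intros Hcon Hfix x.
  assert (Hasym : asymptotic d (orbit x) (orbit xs)).
  { destruct (classic (x = xs)) as [->|Hne]; [apply asymptotic_refl; exact Hd|].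
    apply chain_iter_asymptotic, Hcon, Hne. }
  intros eps Heps. destruct (Hasym eps Heps) as [K HK]. exists K. intros n Hn.
  specialize (HK n Hn). unfold orbit in HK. now rewrite (iterT_fixed T xs Hfix) in HK.
Qed.

Section Orbit.
Variable x0 : X.
Hypothesis Hx0 : 1 <= alpha x0 (T x0).

Lemma orbit_orbital : orbital alpha T x0.
Proof.
  intro n. pose proof (admissible_iter _ _ Hx0 n) as H. unfold orbit in H.
  rewrite iterT_swap in H. exact H.
Qed.

Lemma orbit_step_vanishes :
  asymptotic d (orbit x0) (fun n => orbit x0 (S n)).
Proof.
  intros eps Heps. destruct (alpha_iter_asymptotic _ _ Hx0 eps Heps) as [K HK].
  exists K. intros n Hn. specialize (HK n Hn). unfold orbit in *.
  rewrite iterT_swap in HK. exact HK.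
Qed.

Lemma orbit_limit_fixed xs :
  seq_converges d (orbit x0) xs ->
  alpha_orbitally_continuous d alpha T \/ T_alpha_regular d alpha T -> T xs = xs.
Proof.
  intros Hxs Hcase.
  assert (Hsucc : forall phi, strictly_increasing phi ->
            seq_converges d (fun k => T (orbit x0 (phi k))) xs).
  { intros phi Hphi. apply (converges_subseq d (orbit x0) xs (fun k => S (phi k))); auto.
    intro k. specialize (Hphi k). lia. }
  symmetry. destruct Hcase as [Hcont|Hreg].
  - destruct (Hcont x0 xs orbit_orbital Hxs) as [phi [Hphi HTphi]].
    exact (limit_unique d Hd _ _ _ (Hsucc phi Hphi) HTphi).
  - destruct (Hreg x0 xs orbit_orbital Hxs) as [phi [Hphi Hrel]].
    apply (limit_unique d Hd _ _ _ (Hsucc phi Hphi)).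
    intros eps Heps. destruct (converges_subseq d _ xs phi Hphi Hxs eps Heps) as [K HK].
    exists K. intros k Hk. specialize (HK k Hk).
    pose proof (alpha_dist_nonexpansive _ _ (Hrel k)). unfold orbit in *. lra.
Qed.

Section Transitive.
Variable N : nat.
Hypothesis HN_pos : (0 < N)%nat.
Hypothesis HN : N_transitive N alpha.

(* Meir-Keeler induction: pass from u_n to u_(n+N) in N small steps, then use that T^N,
   like T, maps the alpha-related pair (u_n, u_(n+1+jN)) below eps. *)
Lemma orbit_jump_dist eps delta c K : 0 < eps ->
  (forall x y, eps <= d x y -> d x y < eps + delta -> alpha x y * d (T x) (T y) < eps) ->
  INR N * c <= delta ->
  (forall m, (K <= m)%nat -> d (orbit x0 m) (orbit x0 (S m)) <= c) ->
  forall j n, (K <= n)%nat -> d (orbit x0 n) (orbit x0 (n + 1 + j * N)%nat) < eps + delta.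
Proof.
  intros Heps Hlt Hc Hsteps.
  assert (HN1 : 1 <= INR N) by (apply (le_INR 1); lia).
  intros j; induction j as [|j IH]; intros n Hn.
  - replace (n + 1 + 0 * N)%nat with (S n) by lia.
    pose proof (Hsteps n Hn). pose proof (dist_ge0 d Hd (orbit x0 n) (orbit x0 (S n))).
    nra.
  - set (m := (n + 1 + j * N)%nat).
    assert (Hrel : 1 <= alpha (orbit x0 n) (orbit x0 m))
      by (apply (transitive_jump alpha N), orbit_orbital; assumption).
    assert (HTN : d (orbit x0 (N + n)) (orbit x0 (N + m)) < eps).
    { unfold orbit. rewrite !iterT_add.
      eapply Rle_lt_trans; [apply (iter_dist_antitone _ _ 1 N Hrel); lia|].
      apply (MK_step eps delta Hlt _ _ Hrel), IH, Hn. }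
    pose proof (dist_telescope d Hd (orbit x0) c K Hsteps n N Hn) as Hwalk.
    rewrite Nat.add_comm in Hwalk.
    pose proof (dist_triangle d Hd (orbit x0 n) (orbit x0 (N + n)) (orbit x0 (N + m))).
    replace (n + 1 + S j * N)%nat with (N + m)%nat by (unfold m; lia). lra.
Qed.

Lemma orbit_cauchy : cauchy_seq d (orbit x0).
Proof.
  intros eps Heps.
  destruct (HMK (eps / 3)) as [delta [Hdelta Hlt]]; [lra|].
  set (delta' := Rmin delta (eps / 3)).
  assert (Hdelta' : 0 < delta' /\ delta' <= delta /\ delta' <= eps / 3).
  { unfold delta'. repeat split; [apply Rmin_case; lra|apply Rmin_l|apply Rmin_r]. }
  assert (Hlt' : forall x y, eps / 3 <= d x y -> d x y < eps / 3 + delta' ->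
                   alpha x y * d (T x) (T y) < eps / 3)
    by (intros x y H1 H2; apply Hlt; lra).
  assert (HN1 : 0 < INR N) by (apply lt_0_INR; lia).
  set (c := delta' / INR N).
  assert (Hc : INR N * c = delta') by (unfold c; field; lra).
  destruct (orbit_step_vanishes c) as [K HK]; [unfold c; apply Rdiv_lt_0_compat; lra|].
  assert (Hsteps : forall m, (K <= m)%nat -> d (orbit x0 m) (orbit x0 (S m)) <= c)
    by (intros m Hm; apply Rlt_le, HK, Hm).
  assert (Hfwd : forall n m, (K <= n)%nat -> (n < m)%nat -> d (orbit x0 n) (orbit x0 m) < eps).
  { intros n m Hn Hnm.
    set (j := ((m - n - 1) / N)%nat). set (r := ((m - n - 1) mod N)%nat).
    pose proof (Nat.div_mod (m - n - 1) N ltac:(lia)) as Hdiv.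
    pose proof (Nat.mod_upper_bound (m - n - 1) N ltac:(lia)) as Hr.
    fold j r in Hdiv, Hr.
    replace m with (n + 1 + j * N + r)%nat by lia.
    pose proof (orbit_jump_dist (eps / 3) delta' c K ltac:(lra) Hlt' ltac:(lra) Hsteps j n Hn).
    pose proof (dist_telescope d Hd (orbit x0) c K Hsteps (n + 1 + j * N) r ltac:(lia)).
    pose proof (dist_triangle d Hd (orbit x0 n) (orbit x0 (n + 1 + j * N)%nat)
                  (orbit x0 (n + 1 + j * N + r)%nat)).
    assert (INR r * c <= INR N * c).
    { apply Rmult_le_compat_r; [unfold c; apply Rlt_le, Rdiv_lt_0_compat; lra|].
      apply le_INR; lia. }
    lra. }
  exists K. intros m n Hm Hn.
  destruct (Nat.lt_total m n) as [Hmn|[->|Hnm]].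
  - auto.
  - rewrite (dist_refl d Hd). exact Heps.
  - rewrite (dist_sym d Hd). auto.
Qed.

End Transitive.
End Orbit.
End Contraction.

Theorem theorem4 (X : Type) (d : X -> X -> R) (N : nat)
  (alpha : X -> X -> R) (T : X -> X) :
  complete_metric d ->
  (0 < N)%nat ->
  (forall x y, 0 <= alpha x y) ->
  N_transitive N alpha ->
  alpha_MK_contractive d alpha T ->
  alpha_admissible alpha T ->
  (exists x0, 1 <= alpha x0 (T x0)) ->
  (alpha_orbitally_continuous d alpha T \/ T_alpha_regular d alpha T) ->
  alpha_connected alpha ->
  exists xs : X, T xs = xs /\ (forall y, T y = y -> y = xs) /\
    forall x, seq_converges d (fun n => iterT T n x) xs.
Proof.
  intros [Hd Hcomplete] HN_pos _ HN HMK Hadm [x0 Hx0] Hcase Hcon.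
  destruct (Hcomplete _ (orbit_cauchy d alpha T Hd HMK Hadm x0 Hx0 N HN_pos HN))
    as [xs Hxs].
  pose proof (orbit_limit_fixed d alpha T Hd HMK Hadm x0 Hx0 xs Hxs Hcase) as Hfix.
  pose proof (iter_converges_to_fixed d alpha T Hd HMK Hadm xs Hcon Hfix) as Hconv.
  exists xs. split; [exact Hfix|]. split; [|exact Hconv].
  intros y Hy. apply (limit_unique d Hd (fun n => iterT T n y)); [|apply Hconv].
  intros eps Heps. exists O. intros n _.
  rewrite (iterT_fixed T y Hy), (dist_refl d Hd). exact Heps.
Qed.
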